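(* Let $Q$ be a set and $(F_i)_{i\in I}$ a family of real-valued maps on $Q$ that is of type $c_0\ell_1$. Then the cardinality of the set $\{t\in Q:(F_i(t))_{i\in I}\notin c_0(I)\}$ is less than or equal to the cardinality of $I$.
   Context: $c_0(I)$ is the set of real families $(a_i)_{i\in I}$ such that $\{i:|a_i|\ge\varepsilon\}$ is finite for every $\varepsilon>0$; write $\lim_{i\in I}a_i=0$ for this. A family $(F_i)_{i\in I}$ of real-valued maps on a set $Q$ is of type $c_0\ell_1$ if one can write $F_i(t)=a_{i,t}+b_{i,t}$ for all $i\in I$, $t\in Q$, with $\lim_{i\in I}a_{i,t}=0$ for every $t\in Q$ and $\sup_{i\in I}\sum_{t\in Q}|b_{i,t}|<\infty$. *)

From HB Require Import structures.
From mathcomp Require Import all_boot all_order all_algebra.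
From mathcomp Require Import all_classical all_reals.
From mathcomp Require Import ereal esum.
Set Implicit Arguments. Unset Strict Implicit. Unset Printing Implicit Defensive.
Import Order.TTheory GRing.Theory Num.Theory.
Local Open Scope classical_set_scope.
Local Open Scope ring_scope.

Definition in_c0 (R : realType) (I : Type) (a : I -> R) : Prop :=
  forall eps : R, 0 < eps -> finite_set [set i | eps <= `|a i|].

Definition type_c0l1 (R : realType) (I : Type) (Q : choiceType)
    (F : I -> Q -> R) : Prop :=
  exists (a b : I -> Q -> R),
    (forall i t, F i t = a i t + b i t) /\
    (forall t, in_c0 (fun i => a i t)) /\
    (exists M : R, forall i, (\esum_(t in [set: Q]) (`|b i t|)%:E <= M%:E)%E).

(* A point [t] at which [(F i t)_i] is not in [c_0] lies in the support of some
   [b_i], and each of these supports is countable because [b_i] is summable.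
   So the bad points inject into [I * nat], which is no larger than [I] when
   [I] is infinite: by Zorn's lemma there is a maximal partial injection
   [D * nat -> D], and maximality forces [D] to be cofinite. When [I] is
   finite every family indexed by [I] is in [c_0]. *)

From HB Require Import structures.
From mathcomp Require Import all_boot all_order all_algebra.
From mathcomp Require Import all_classical all_reals.
From mathcomp Require Import ereal esum.
From mathcomp Require finmap.
From mathcomp Require Import zify.
Import Order.TTheory GRing.Theory Num.Theory.
Local Open Scope classical_set_scope.
Local Open Scope card_scope.
Local Open Scope ring_scope.

Section NatAbsorption.
Context {T : pointedType}.
Implicit Types G : set (T * nat * T).

Definition nat_graph_dom G : set T := [set a | exists n x, G (a, n, x)].

(* With [D := nat_graph_dom G], every pair of [D * nat] is related by [G] to
   some point of [D], and no point to two different pairs: any choice function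
   inside [G] injects [D * nat] into [D]. *)
Definition nat_absorbing G : Prop := [/\
  forall a n b m x, G (a, n, x) -> G (b, m, x) -> a = b /\ n = m,
  forall a m, nat_graph_dom G a -> exists x, G (a, m, x) &
  forall a n x, G (a, n, x) -> nat_graph_dom G x].

Lemma nat_absorbing_bigcup (F : set (set (T * nat * T))) :
  F `<=` nat_absorbing -> total_on F subset ->
  nat_absorbing (\bigcup_(G in F) G).
Proof.
move=> FA Ftot.
have common z z' : (\bigcup_(G in F) G) z -> (\bigcup_(G in F) G) z' ->
    exists2 G, F G & G z /\ G z'.
  move=> [G FG Gz] [G' FG' G'z'].
  have [GG'|G'G] := Ftot G G' FG FG'.
    by exists G' => //; split=> //; exact: GG'.
  by exists G => //; split=> //; exact: G'G.
split.
- move=> a n b m x /common /[apply] -[G /FA[Ginj _ _] [Ga Gb]]; exact: Ginj Ga Gb.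
- move=> a m [n [x [G FG Gx]]]; have [_ Gtot _] := FA G FG.
  by have [|y Gy] := Gtot a m; [exists n, x | exists y, G].
- move=> a n x [G FG Gx]; have [_ _ Gdom] := FA G FG.
  by have [m [y Gy]] := Gdom a n x Gx; exists m, y, G.
Qed.

Lemma nat_absorbing_setU G G' :
  nat_absorbing G -> nat_absorbing G' ->
  nat_graph_dom G `&` nat_graph_dom G' = set0 ->
  nat_absorbing (G `|` G').
Proof.
move=> [Ginj Gtot Gdom] [G'inj G'tot G'dom] disj.
have apart a : nat_graph_dom G a -> nat_graph_dom G' a -> False.
  by move=> Da D'a; rewrite -[False]/(set0 a) -disj.
split.
- move=> a n b m x [Ga|G'a] [Gb|G'b]; [exact: Ginj Ga Gb| | |exact: G'inj G'a G'b].
    by case: (apart x); [exact: Gdom Ga|exact: G'dom G'b].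
  by case: (apart x); [exact: Gdom Gb|exact: G'dom G'a].
- move=> a m [n [x [Gx|G'x]]].
    by have [|y Gy] := Gtot a m; [exists n, x | exists y; left].
  by have [|y G'y] := G'tot a m; [exists n, x | exists y; right].
- move=> a n x [Gx|G'x].
    by have [m [y Gy]] := Gdom a n x Gx; exists m, y; left.
  by have [m [y G'y]] := G'dom a n x G'x; exists m, y; right.
Qed.

Definition nat_copy_graph (e : nat -> T) : set (T * nat * T) :=
  [set z | exists k n, z = (e k, n, e (pickle (k, n)))].

Lemma nat_copy_graph_dom (e : nat -> T) : nat_graph_dom (nat_copy_graph e) = range e.
Proof.
apply/seteqP; split=> [a [n [x [k [m [-> _ _]]]]]|_ [k _ <-]]; first by exists k.
by exists 0%N, (e (pickle (k, 0%N))), k, 0%N.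
Qed.

Lemma nat_absorbing_copy (e : nat -> T) : injective e ->
  nat_absorbing (nat_copy_graph e).
Proof.
move=> e_inj; have pickle_inj := pcan_inj (@pickleK (nat * nat)%type).
rewrite /nat_absorbing nat_copy_graph_dom; split.
- move=> a n b m x [k [n1 [-> -> ->]]] [k' [n2 [-> -> /e_inj/pickle_inj[-> ->]]]] //.
- by move=> _ m [k _ <-]; exists (e (pickle (k, m))), k, m.
- by move=> a n x [k [m [_ _ ->]]]; exists (pickle (k, m)).
Qed.

Lemma nat_absorbing_cofinite :
  exists2 G, nat_absorbing G & cofinite_set (nat_graph_dom G).
Proof.
have [G [GA Gmax]] := Zorn_bigcup nat_absorbing_bigcup.
exists G => //; apply: contrapT => /infiniteP/pcard_leP[e].
have e_inj : injective e by move=> k l; apply: (@inj _ _ _ e); rewrite inE.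
have e_out k : ~ nat_graph_dom G (e k) by apply: (@funS _ _ _ _ e k).
apply: (Gmax (G `|` nat_copy_graph e)).
  split; first exact: subsetUl.
  move=> /(_ (e 0%N, 0%N, e (pickle (0%N, 0%N)))) GUe; apply: (e_out 0%N).
  by do 2 eexists; apply: GUe; right; exists 0%N, 0%N.
apply: nat_absorbing_setU => //; first exact: nat_absorbing_copy.
rewrite nat_copy_graph_dom; apply/seteqP; split=> // a [Da [k _ ka]].
by apply: (e_out k); rewrite ka.
Qed.

End NatAbsorption.

(* Pairs over [D] go through [G] with their second coordinate doubled; pairs
   over the finite rest [~` D] are coded, through an injection of [~` D] into
   [nat], as odd second coordinates over a fixed point [a0] of [D]. *)
Lemma card_prod_nat_le {T : Type} :
  infinite_set [set: T] -> [set: T * nat] #<= [set: T].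
Proof.
elim/Ppointed: T => T; first by rewrite (empty_eq0 setT) => /(_ (finite_set0 _)).
move=> infT; have [G [Ginj Gtot _] cofD] := @nat_absorbing_cofinite T.
set D := nat_graph_dom G in Gtot cofD.
have [a0 Da0] : D !=set0.
  by apply/set0P/eqP => D0; move: cofD; rewrite D0 setC0.
have [c c_inj] := countable_injP _ (finite_set_countable cofD).
have /choice[g gG] p : exists x, D p.1 -> G (p.1, p.2, x).
  have [/(Gtot _ p.2)[x Gx]|] := pselect (D p.1); first by exists x.
  by exists point.
have g_inj p q : D p.1 -> D q.1 -> g p = g q -> p = q.
  case: p q => [a n] [b m] Da Db gpq.
  have Gb : G (b, m, g (a, n)) by rewrite gpq; exact: (gG (b, m) Db).
  by have [-> ->] := Ginj a n b m _ (gG (a, n) Da) Gb.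
pose k p := if `[< D p.1 >] then (p.1, 2 * p.2)%N
            else (a0, (2 * pickle (c p.1, p.2)).+1).
have kD p : D (k p).1 by rewrite /k; case: asboolP.
apply/pcard_injP; exists (g \o k) => -[a n] [b m] _ _ /= /(g_inj _ _ (kD _) (kD _)).
rewrite /k /=; case: (asboolP (D a)) => Da; case: (asboolP (D b)) => Db [];
  try by move=> *; lia.
- by move=> -> ?; congr pair; lia.
- move=> /eqP; rewrite eqn_pmul2l // => /eqP/(pcan_inj (@pickleK _))[].
  by move=> cab ->; rewrite (c_inj a b) ?inE.
Qed.

Lemma card_bigcup_countable_le {I T : Type} (F : I -> set T) :
  (forall i, countable (F i)) -> \bigcup_i F i #<= [set: I * nat].
Proof.
elim/Ppointed: I F => I F cF.
  by rewrite (empty_eq0 setT) bigcup_set0; exact: card_ge0.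
have /choice[c c_inj] i : exists c : T -> nat, {in F i &, injective c}.
  exact/countable_injP.
have /choice[j Fj] t : exists i, (\bigcup_i F i) t -> F i t.
  have [[i _ Fit]|] := pselect ((\bigcup_i F i) t); first by exists i.
  by exists point.
apply/pcard_injP; exists (fun t => (j t, c (j t) t)).
move=> s t /set_mem/Fj Fs /set_mem/Fj Ft [jst]; rewrite -jst in Ft *.
by apply: c_inj; rewrite inE.
Qed.

Section SummableSupport.
(* Imported only here: [finmap] shadows the [pickle] used above. *)
Import finmap.
Context {R : realType} {T : choiceType} {b : T -> R} {M : R}.
Hypothesis bM : (\esum_(t in [set: T]) `|b t|%:E <= M%:E)%E.

Lemma esum_level_finite (e : R) : 0 < e -> finite_set [set t | e <= `|b t|].
Proof.
move=> e0; apply: contrapT.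
move=> /(infinite_set_fset (Num.truncn (M / e)).+1)[B Be Bsize].
have sumB : \sum_(t <- B) `|b t| <= M.
  rewrite -lee_fin; apply: le_trans bM; apply: esum_ge; exists [set` B].
    by split; [exact: finite_fset|].
  by rewrite fsbig_finite ?finite_fset // set_fsetK sumEFin.
suff : M < \sum_(t <- B) `|b t| by rewrite ltNge sumB.
apply: (lt_le_trans (y := e *+ #|` B|)).
  have := truncnS_gt (M / e); rewrite ltr_pdivrMr // mulrC mulr_natr => /lt_le_trans.
  by apply; rewrite ler_wpMn2l ?ltW.
rewrite -[e *+ _]addr0 -iter_addr -count_predT -big_const_seq big_seq [leRHS]big_seq.
by apply: ler_sum => t /Be.
Qed.

Lemma esum_support_countable : countable [set t | b t != 0].
Proof.
apply: (@sub_countable _ _ _ (\bigcup_n [set t | n.+1%:R^-1 <= `|b t|])).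
  apply: subset_card_le => t bt; exists (Num.truncn `|b t|^-1) => //=.
  rewrite invf_ple ?posrE ?ltr0Sn ?normr_gt0 //; exact: ltW (truncnS_gt _).
apply: bigcup_countable => // n _.
exact/finite_set_countable/esum_level_finite.
Qed.

End SummableSupport.

Lemma in_c0_finite {R : realType} {I : Type} (a : I -> R) :
  finite_set [set: I] -> in_c0 a.
Proof. by move=> finI eps _; apply: sub_finite_set finI. Qed.

Theorem proposition2p6 (R : realType) (I : Type) (Q : choiceType)
    (F : I -> Q -> R) :
  type_c0l1 F ->
  [set t : Q | ~ in_c0 (fun i => F i t)] #<= [set: I].
Proof.
move=> [a [b [Fab [a_c0 [M bM]]]]].
have [finI|infI] := pselect (finite_set [set: I]).
  rewrite (_ : [set t | _] = set0); first exact: card_ge0.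
  by apply/seteqP; split=> t // /(_ (in_c0_finite _ finI)).
apply: (card_le_trans _ (card_prod_nat_le infI)).
apply: (card_le_trans _ (card_bigcup_countable_le _
  (fun i => esum_support_countable (bM i)))).
apply: subset_card_le => t /= Ft; apply: contrapT => b_t; apply: Ft.
have b_t0 i : b i t = 0 by apply/eqP/negPn/negP => bit; apply: b_t; exists i.
by under eq_fun => i do rewrite Fab b_t0 addr0; exact: a_c0.
Qed.
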